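(* Let $(G,N,\theta)_{\mathcal H}$ be an $\mathcal H$-triple and let $\mathcal P$ be a projective representation of $G_\theta$ associated with $\theta$, with entries in $\mathbb Q^{\mathrm{ab}}$ and factor set $\alpha$. (a) Let $g\in G_\theta$. Then $\mathcal P^g(y)=\mu_g(y)M\mathcal P(y)M^{-1}$ for all $y\in G_\theta$, where $\mu_g(y)=\dfrac{\alpha(g,g^{-1})}{\alpha(g,yg^{-1})\alpha(y,g^{-1})}$ and $M=\mathcal P(g)$. In particular, $\mu_g$ takes values in $\mathbb Q^{\mathrm{ab}}\setminus\{0\}$. (b) Let $(g,\sigma)\in(G\times\mathcal H)_\theta$ and write $g=tx$ with $t\in G_\theta$ and $x\in G$. Then $\theta^{x\sigma}=\theta$, $(G_\theta)^x=G_\theta$, and $\mu_{g\sigma}=\mu_t^{x\sigma}\mu_{x\sigma}$, where $\mu_t^{x\sigma}(y)=\sigma(\mu_t(xyx^{-1}))$ for $y\in G_\theta$.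
   Context: All groups are finite; $p$ is a fixed prime. $\mathbb Q^{\mathrm{ab}}\subseteq\mathbb C$ is generated by all roots of unity, $\mathcal G=\mathrm{Gal}(\mathbb Q^{\mathrm{ab}}/\mathbb Q)$, $\mathcal H\le\mathcal G$ consists of those $\sigma$ for which there is an integer $f$ with $\sigma(\xi)=\xi^{p^f}$ for all roots of unity $\xi$ of order prime to $p$. For $N\trianglelefteq G$, $\theta\in\mathrm{Irr}(N)$, $g\in G$, $\sigma\in\mathcal G$: $\theta^{g\sigma}(n)=\sigma(\theta(gng^{-1}))$; $(G\times\mathcal H)_\theta$ is the stabilizer of $\theta$; $\theta^{\mathcal H}$ the $\mathcal H$-orbit; $G_{\theta^{\mathcal H}}=\{g:\theta^g\in\theta^{\mathcal H}\}$. $(G,N,\theta)_{\mathcal H}$ is an $\mathcal H$-triple if $N\trianglelefteq G$, $\theta\in\mathrm{Irr}(N)$, $G_{\theta^{\mathcal H}}=G$. A projective representation $\mathcal P$ with factor set $\alpha$ satisfies $\mathcal P(x)\mathcal P(y)=\alpha(x,y)\mathcal P(xy)$; $\mathcal P$ on $G_\theta$ is associated with $\theta$ if $\mathcal P_N$ affords $\theta$ and $\mathcal P(ng)=\mathcal P(n)\mathcal P(g)$, $\mathcal P(gn)=\mathcal P(g)\mathcal P(n)$. For $(x,\sigma)\in G\times\mathcal G$ with $\theta^{x\sigma}=\theta$, $\mathcal P^{x\sigma}(y)=\sigma(\mathcal P(xyx^{-1}))$ (entrywise; $\mathcal P^x$ when $\sigma=1$), and $\mu_{x\sigma}:G_\theta\to\mathbb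 C^\times$ is the unique function, constant on $N$-cosets with $\mu_{x\sigma}(1)=1$, such that $\mathcal P^{x\sigma}(y)=\mu_{x\sigma}(y)L^{-1}\mathcal P(y)L$ for all $y$, for some invertible matrix $L$. *)

From HB Require Import structures.
From mathcomp Require Import all_boot all_order all_algebra all_fingroup all_solvable all_field all_character.
Set Implicit Arguments. Unset Strict Implicit. Unset Printing Implicit Defensive.
Import Order.TTheory GRing.Theory Num.Theory.
Local Open Scope ring_scope.

(* Q^ab inside algC: the field generated by all roots of unity, i.e. the
   union of the cyclotomic fields Q(zeta_m). *)
Definition Qab (z : algC) : Prop :=
  exists (m : nat) (zeta : algC) (q : {poly rat}),
    (0 < m)%N /\ m.-primitive_root zeta /\ z = (map_poly ratr q).[zeta].

(* sigma in calH: there is an integer f with sigma(xi) = xi^(p^f) for every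
   root of unity xi of order prime to p.  For f < 0, xi^(p^f) is the unique
   p'-root of unity whose (p^|f|)-th power is xi.  Elements of Gal(Q^ab/Q)
   are represented by (restrictions of) field automorphisms of algC. *)
Definition in_calH (p : nat) (sigma : {rmorphism algC -> algC}) : Prop :=
  exists f : int, forall (m : nat) (xi : algC),
    (0 < m)%N -> coprime m p -> xi ^+ m = 1 ->
    if (0 <= f)%R then sigma xi = xi ^+ (p ^ `|f|)
    else (sigma xi) ^+ (p ^ `|f|) = xi.

(* theta^{g sigma} (n) = sigma (theta (g n g^-1)) *)
Definition cfConjAut (gT : finGroupType) (N : {group gT}) (theta : 'CF(N))
  (g : gT) (sigma : {rmorphism algC -> algC}) : 'CF(N) :=
  cfAut sigma (theta ^ g)%CF.

Definition H_triple (p : nat) (gT : finGroupType) (G N : {group gT})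
  (theta : 'CF(N)) : Prop :=
  (N <| G)%g /\ theta \in irr N /\
  (forall g, g \in G -> exists tau, in_calH p tau /\ (theta ^ g)%CF = cfAut tau theta).

Definition proj_rep_assoc (gT : finGroupType) (N : {group gT}) (T : {set gT})
  (theta : 'CF(N)) (n : nat) (P : gT -> 'M[algC]_n) (alpha : gT -> gT -> algC)
  : Prop :=
  [/\ (forall x, x \in T -> P x \in unitmx),
      (forall x y, x \in T -> y \in T ->
         alpha x y != 0 /\ P x *m P y = alpha x y *: P (x * y)%g),
      mx_repr N P,
      (forall m, m \in N -> theta m = \tr (P m)) &
      (forall m x, m \in N -> x \in T ->
         P (m * x)%g = P m *m P x /\ P (x * m)%g = P x *m P m)].

Definition Pconj (gT : finGroupType) (n : nat) (P : gT -> 'M[algC]_n)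
  (x : gT) (sigma : algC -> algC) : gT -> 'M[algC]_n :=
  fun y => map_mx sigma (P (x * y * x^-1)%g).

(* mu is the function mu_{x sigma} : G_theta -> C^x, i.e. it is constant on
   N-cosets, mu 1 = 1, and P^{x sigma}(y) = mu(y) L^-1 P(y) L for some
   invertible L. (Such a function is unique.) *)
Definition is_mu (gT : finGroupType) (N : {group gT}) (T : {set gT})
  (n : nat) (P : gT -> 'M[algC]_n) (x : gT) (sigma : algC -> algC)
  (mu : gT -> algC) : Prop :=
  [/\ (forall m y, m \in N -> y \in T -> mu (m * y)%g = mu y),
      mu 1%g = 1,
      (forall y, y \in T -> mu y != 0) &
      exists2 L : 'M[algC]_n, L \in unitmx &
        forall y, y \in T -> Pconj P x sigma y = mu y *: (invmx L *m P y *m L)].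

From HB Require Import structures.
From mathcomp Require Import all_boot all_order all_algebra all_fingroup all_solvable all_field all_character.
From mathcomp Require Import ring.
Import Order.TTheory GRing.Theory Num.Theory.
Set Implicit Arguments. Unset Strict Implicit. Unset Printing Implicit Defensive.
Local Open Scope ring_scope.

(* Everything about mu rests on Schur's lemma. P restricted to N is an
   irreducible representation affording theta, so if
   mu y L^-1 P(y) L = mu' y L'^-1 P(y) L' on G_theta with mu, mu' trivial on N,
   then L L'^-1 centralizes P(N), hence is a nonzero scalar, and mu = mu'.
   It therefore suffices to exhibit one solution. In (a), P(g y g^-1) is
   computed from the factor set using P(g)^-1 = alpha(g,g^-1)^-1 P(g^-1). In
   (b), y |-> sigma(mu_t(x y x^-1)) mu_{x sigma}(y) is a solution for
   L = L_{x sigma} sigma(L_t); that theta^{x sigma} = theta follows from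
   t fixing theta, and then x normalizes G_theta because inertia groups are
   invariant under Galois conjugation. Finally mu_g takes values in Q^ab,
   because Q^ab is a field and alpha(x,y) is a quotient of entries of
   P(x) P(y) and P(xy). *)

Lemma Qab0 : Qab 0.
Proof.
have [z pz] := C_prim_root_exists (isT : (0 < 1)%N).
by exists 1%N, z, 0; rewrite map_poly0 horner0.
Qed.

Lemma cyclotomic_field_lift m k (zeta_m zeta : algC) (q : {poly rat}) :
  (0 < k)%N -> m.-primitive_root zeta_m -> (m * k).-primitive_root zeta ->
  exists q' : {poly rat}, (map_poly ratr q).[zeta_m] = (map_poly ratr q').[zeta].
Proof.
move=> k_gt0 prim_zeta_m prim_zeta.
have prim_zeta_k : m.-primitive_root (zeta ^+ k).
  by have := exp_prim_root prim_zeta k; rewrite gcdnMl mulnK.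
have [i ->] := prim_rootP prim_zeta_k (prim_expr_order prim_zeta_m).
exists (q \Po 'X^(k * i)).
by rewrite map_comp_poly map_polyXn horner_comp hornerXn exprM.
Qed.

Lemma Qab_common_root a b : Qab a -> Qab b ->
  exists (m : nat) (zeta : algC) (qa qb : {poly rat}),
    [/\ m.-primitive_root zeta, a = (map_poly ratr qa).[zeta] &
        b = (map_poly ratr qb).[zeta]].
Proof.
move=> [m1 [z1 [q1 [m1_gt0 [prim_z1 ->]]]]] [m2 [z2 [q2 [m2_gt0 [prim_z2 ->]]]]].
have m_gt0 : (0 < m1 * m2)%N by rewrite muln_gt0 m1_gt0.
have [z prim_z] := C_prim_root_exists m_gt0.
have [qa ->] := cyclotomic_field_lift q1 m2_gt0 prim_z1 prim_z.
rewrite mulnC in prim_z.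
have [qb ->] := cyclotomic_field_lift q2 m1_gt0 prim_z2 prim_z.
by exists (m2 * m1)%N, z, qa, qb.
Qed.

Lemma Qab_poly m (zeta : algC) (q : {poly rat}) :
  m.-primitive_root zeta -> Qab (map_poly ratr q).[zeta].
Proof. by move=> prim_zeta; exists m, zeta, q; rewrite (prim_order_gt0 prim_zeta). Qed.

Lemma QabD a b : Qab a -> Qab b -> Qab (a + b).
Proof.
move=> Qa Qb; have [m [z [qa [qb [prim_z -> ->]]]]] := Qab_common_root Qa Qb.
by rewrite -hornerD -rmorphD; apply: Qab_poly prim_z.
Qed.

Lemma QabM a b : Qab a -> Qab b -> Qab (a * b).
Proof.
move=> Qa Qb; have [m [z [qa [qb [prim_z -> ->]]]]] := Qab_common_root Qa Qb.
by rewrite -hornerM -rmorphM; apply: Qab_poly prim_z.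
Qed.

Lemma Qab_sum (I : finType) (F : I -> algC) : (forall i, Qab (F i)) -> Qab (\sum_i F i).
Proof. by move=> QF; apply: (big_ind Qab Qab0 QabD) => i _; apply: QF. Qed.

(* Q[zeta] is a field: in subfx, the copy of Q(zeta) obtained by adjoining a
   root of X^m - 1, every element is a polynomial in zeta. *)
Lemma QabV a : Qab a -> Qab a^-1.
Proof.
move=> [m [z [q [m_gt0 [prim_z ->]]]]].
pose r : {poly rat} := 'X^m - 1.
have r_neq0 : r != 0 by rewrite -size_poly_eq0 size_XnsubC.
have root_r : root (map_poly (ratr : rat -> algC) r) z.
  by rewrite rmorphB /= map_polyXn rmorph1 rootE !hornerE prim_expr_order ?subrr.
pose x := subfx_eval (ratr : {rmorphism rat -> algC}) z r q.
have [q' def_xV] := subfxE x^-1.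
have := subfx_inj_eval root_r r_neq0 q'.
rewrite -def_xV fmorphV /= subfx_inj_eval // => ->.
exact: Qab_poly prim_z.
Qed.

Lemma Qab_mulmx n (A B : 'M[algC]_n) :
  (forall i j, Qab (A i j)) -> (forall i j, Qab (B i j)) ->
  forall i j, Qab ((A *m B) i j).
Proof. by move=> QA QB i j; rewrite mxE; apply: Qab_sum => k; apply: QabM. Qed.

Lemma scalerIv (F : fieldType) (V : lmodType F) (v : V) :
  v != 0 -> injective ( *:%R^~ v).
Proof.
move=> v_neq0 a b /eqP; rewrite -subr_eq0 -scalerBl scaler_eq0 (negPf v_neq0).
by rewrite orbF subr_eq0 => /eqP.
Qed.

Lemma unitmx_neq0 (R : comUnitRingType) n (A : 'M[R]_n) :
  (0 < n)%N -> A \in unitmx -> A != 0.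
Proof.
by case: n A => // n A _; apply: contraTneq => ->; rewrite unitmxE det0 unitr0.
Qed.

Lemma invmxM (R : comUnitRingType) n (A B : 'M[R]_n) :
  A \in unitmx -> B \in unitmx -> invmx (A *m B) = invmx B *m invmx A.
Proof.
move=> uA uB; have inv_AB : A *m B *m (invmx B *m invmx A) = 1%:M.
  by rewrite mulmxA mulmxK // mulmxV.
by rewrite -[LHS]mulmx1 -inv_AB mulmxA mulVmx ?unitmx_mul ?uA // mul1mx.
Qed.

Lemma cent_unitmx_scalar (gT : finGroupType) (G : {group gT}) n
    (rG : mx_representation algC G n) (C : 'M[algC]_n) :
  mx_irreducible rG -> centgmx rG C -> C \in unitmx -> exists2 c, c != 0 & C = c%:M.
Proof.
move=> irrG cGC uC.
have absG := group_closure_closed_field irrG.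
have /is_scalar_mxP[c defC] := mx_abs_irr_cent_scalar absG cGC.
exists c => //; apply: contraTneq uC => c0.
have n_gt0 : (0 < n)%N by case/mx_irrP: irrG.
by apply/negP => /(unitmx_neq0 n_gt0); rewrite defC c0 -scalemx1 scale0r eqxx.
Qed.

Lemma memJV_norm (gT : finGroupType) (A : {set gT}) x y :
  x \in 'N(A)%g -> ((x * y * x^-1)%g \in A) = (y \in A).
Proof. by move=> nAx; rewrite -{1}[x]invgK -mulgA -conjgE memJ_norm ?groupV. Qed.

Definition factor_set_mu (gT : finGroupType) (alpha : gT -> gT -> algC) (g y : gT) :=
  alpha g g^-1%g / (alpha g (y * g^-1)%g * alpha y g^-1%g).

Section ProjectiveRepresentation.

Variables (gT : finGroupType) (N T : {group gT}) (theta : 'CF(N)).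
Variables (n : nat) (P : gT -> 'M[algC]_n) (alpha : gT -> gT -> algC).
Hypotheses (nsNT : (N <| T)%g) (irr_theta : theta \in irr N).
Hypothesis projP : proj_rep_assoc T theta P alpha.

Let reprN : mx_repr N P. Proof. by case: projP. Qed.
Local Notation rN := (MxRepresentation reprN).

Let sNT : N \subset T. Proof. exact: normal_sub nsNT. Qed.
Let nNT : T \subset 'N(N)%g. Proof. exact: normal_norm nsNT. Qed.

Lemma proj_repr_unitmx x : x \in T -> P x \in unitmx.
Proof. by case: projP => uP _ _ _ _; apply: uP. Qed.

Lemma proj_reprM x y : x \in T -> y \in T -> P x *m P y = alpha x y *: P (x * y)%g.
Proof. by case: projP => _ PM _ _ _ Tx Ty; case: (PM x y Tx Ty). Qed.

Lemma factor_set_neq0 x y : x \in T -> y \in T -> alpha x y != 0.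
Proof. by case: projP => _ PM _ _ _ Tx Ty; case: (PM x y Tx Ty). Qed.

Lemma proj_repr_mulNl m x : m \in N -> x \in T -> P (m * x)%g = P m *m P x.
Proof. by case: projP => _ _ _ _ PN Nm Tx; case: (PN m x Nm Tx). Qed.

Lemma proj_repr_mulNr m x : m \in N -> x \in T -> P (x * m)%g = P x *m P m.
Proof. by case: projP => _ _ _ _ PN Nm Tx; case: (PN m x Nm Tx). Qed.

Lemma proj_repr1 : P 1%g = 1%:M.
Proof. exact: repr_mx1 rN. Qed.

Lemma proj_repr_irr : mx_irreducible rN.
Proof.
case: projP => _ _ _ trP _; case/irr_reprP: irr_theta => rG irrG def_theta.
apply: mx_rsim_irr irrG; apply/cfRepr_rsimP; rewrite -def_theta.
by apply/eqP/cfun_inP => x Nx; rewrite cfunE Nx mulr1n trP.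
Qed.

Lemma proj_repr_dim_gt0 : (0 < n)%N.
Proof. by case/mx_irrP: proj_repr_irr. Qed.

Lemma proj_repr_neq0 x : x \in T -> P x != 0.
Proof. by move=> Tx; apply: unitmx_neq0 proj_repr_dim_gt0 (proj_repr_unitmx Tx). Qed.

Lemma is_muN1 x (sigma : algC -> algC) mu :
  is_mu N T P x sigma mu -> forall m, m \in N -> mu m = 1.
Proof. by case=> muN mu1 _ _ m Nm; rewrite -[m]mulg1 muN. Qed.

Lemma is_mu_uniq x (sigma : algC -> algC) mu mu' :
  is_mu N T P x sigma mu -> is_mu N T P x sigma mu' -> {in T, mu =1 mu'}.
Proof.
move=> is_mu_mu is_mu_mu'.
have [_ _ _ [L uL defP]] := is_mu_mu; have [_ _ _ [L' uL' defP']] := is_mu_mu'.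
pose C := L *m invmx L'.
have commC y : y \in T -> mu y *: (P y *m C) = mu' y *: (C *m P y).
  move=> Ty; have := congr1 (fun M => L *m M *m invmx L') (defP' y Ty).
  by rewrite defP // -!scalemxAr -!scalemxAl !mulmxA mulmxV // mul1mx mulmxK //.
have cNC : centgmx rN C.
  apply/centgmxP => m Nm; have := commC m (subsetP sNT m Nm).
  by rewrite (is_muN1 is_mu_mu) // (is_muN1 is_mu_mu') // !scale1r.
have uC : C \in unitmx by rewrite unitmx_mul uL unitmx_inv.
have [c c_neq0 defC] := cent_unitmx_scalar proj_repr_irr cNC uC.
move=> y Ty; apply: (mulIf c_neq0); apply: (scalerIv (v := P y)).
  exact: proj_repr_neq0.
by have := commC y Ty; rewrite defC mul_mx_scalar mul_scalar_mx !scalerA.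
Qed.

Lemma factor_set1l x : x \in T -> alpha 1%g x = 1.
Proof.
move=> Tx; apply: (scalerIv (v := P x)).
  exact: proj_repr_neq0.
have := proj_reprM (group1 T) Tx; rewrite proj_repr1 mul1mx mul1g => def_Px.
by rewrite -def_Px scale1r.
Qed.

Lemma invmx_proj_repr g : g \in T -> invmx (P g) = (alpha g g^-1%g)^-1 *: P g^-1%g.
Proof.
move=> Tg; have Tg' : (g^-1 \in T)%g by rewrite groupV.
have PgPg' : P g *m P g^-1%g = alpha g g^-1%g *: 1%:M.
  by rewrite proj_reprM // mulgV proj_repr1.
rewrite -[RHS](mulKmx (proj_repr_unitmx Tg)) -scalemxAr PgPg' scalerA.
by rewrite mulVf ?factor_set_neq0 // scale1r mulmx1.
Qed.

Lemma Pconj_proj_repr g y : g \in T -> y \in T ->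
  Pconj P g id y = factor_set_mu alpha g y *: (P g *m P y *m invmx (P g)).
Proof.
move=> Tg Ty; have Tg' : (g^-1 \in T)%g by rewrite groupV.
have Tyg' : (y * g^-1 \in T)%g by rewrite groupM.
rewrite /Pconj map_mx_id // invmx_proj_repr // -scalemxAr -mulmxA.
rewrite proj_reprM // -scalemxAr proj_reprM // !scalerA mulgA /factor_set_mu.
have a1 := factor_set_neq0 Tg Tg'; have a2 := factor_set_neq0 Tg Tyg'.
have a3 := factor_set_neq0 Ty Tg'.
set a := alpha g g^-1%g; set b := alpha g (y * g^-1)%g; set c := alpha y g^-1%g.
have -> : a / (b * c) * (a^-1 * c) * b = 1 by field; rewrite a1 a2 a3.
by rewrite scale1r.
Qed.

Lemma factor_set_mu1 g : g \in T -> factor_set_mu alpha g 1%g = 1.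
Proof.
move=> Tg; have Tg' : (g^-1 \in T)%g by rewrite groupV.
by rewrite /factor_set_mu mul1g factor_set1l // mulr1 divff ?factor_set_neq0.
Qed.

Lemma factor_set_mu_neq0 g y : g \in T -> y \in T -> factor_set_mu alpha g y != 0.
Proof.
move=> Tg Ty; have Tg' : (g^-1 \in T)%g by rewrite groupV.
by rewrite mulf_neq0 ?invr_neq0 ?mulf_neq0 ?factor_set_neq0 ?groupM.
Qed.

Lemma factor_set_mu_mulNl g m y : g \in T -> m \in N -> y \in T ->
  factor_set_mu alpha g (m * y)%g = factor_set_mu alpha g y.
Proof.
move=> Tg Nm Ty; have uPg := proj_repr_unitmx Tg.
have Tm := subsetP sNT m Nm; have Tmy := groupM Tm Ty.
have N_gmg' : (g * m * g^-1)%g \in N by rewrite memJV_norm ?(subsetP nNT).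
have T_gyg' : (g * y * g^-1)%g \in T by rewrite !groupM ?groupV.
have P_gmg' : P (g * m * g^-1)%g = P g *m P m *m invmx (P g).
  apply: (canRL (mulmxK uPg)).
  by rewrite -(proj_repr_mulNl N_gmg' Tg) mulgKV proj_repr_mulNr.
have Pconj_id z : Pconj P g id z = P (g * z * g^-1)%g by rewrite /Pconj map_mx_id.
apply: (scalerIv (v := P g *m P (m * y)%g *m invmx (P g))).
  apply: unitmx_neq0 proj_repr_dim_gt0 _.
  by rewrite !unitmx_mul uPg proj_repr_unitmx // unitmx_inv.
rewrite -Pconj_proj_repr // Pconj_id.
have -> : (g * (m * y) * g^-1 = (g * m * g^-1) * (g * y * g^-1))%g.
  by rewrite !mulgA mulgKV.
rewrite proj_repr_mulNl // P_gmg' -Pconj_id Pconj_proj_repr // -scalemxAr.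
by rewrite !mulmxA mulmxKV // -[P g *m P m *m P y]mulmxA -proj_repr_mulNl.
Qed.

Lemma is_mu_factor_set g : g \in T -> is_mu N T P g id (factor_set_mu alpha g).
Proof.
move=> Tg; split=> [m y Nm Ty||y Ty|].
- exact: factor_set_mu_mulNl.
- exact: factor_set_mu1.
- exact: factor_set_mu_neq0.
exists (invmx (P g)); first by rewrite unitmx_inv proj_repr_unitmx.
by move=> y Ty; rewrite invmxK Pconj_proj_repr.
Qed.

Section Rationality.

Hypothesis Qab_P : forall y, y \in T -> forall i j, Qab (P y i j).

Lemma Qab_factor_set x y : x \in T -> y \in T -> Qab (alpha x y).
Proof.
move=> Tx Ty; have Txy := groupM Tx Ty.
have /matrix0Pn[i [j Pxy_ij_neq0]] := proj_repr_neq0 Txy.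
have -> : alpha x y = (P x *m P y) i j / P (x * y)%g i j.
  by rewrite proj_reprM // mxE mulfK.
by apply: QabM; [apply: Qab_mulmx; apply: Qab_P | apply/QabV/Qab_P].
Qed.

Lemma Qab_factor_set_mu g y : g \in T -> y \in T -> Qab (factor_set_mu alpha g y).
Proof.
move=> Tg Ty; have Tg' : (g^-1 \in T)%g by rewrite groupV.
by apply: QabM; [|apply/QabV/QabM]; apply: Qab_factor_set; rewrite ?groupM.
Qed.

End Rationality.

Lemma is_mu_mul (sigma : {rmorphism algC -> algC}) t x mu_t mu_x :
  x \in 'N(N)%g -> x \in 'N(T)%g ->
  is_mu N T P t id mu_t -> is_mu N T P x sigma mu_x ->
  is_mu N T P (t * x)%g sigma (fun y => sigma (mu_t (x * y * x^-1)%g) * mu_x y).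
Proof.
move=> nNx nTx [mutN mut1 mut_neq0 [L uL defPt]] [muxN mux1 mux_neq0 [L' uL' defPx]].
have T_xyx' y : y \in T -> (x * y * x^-1)%g \in T by move=> Ty; rewrite memJV_norm.
split=> [m y Nm Ty||y Ty|].
- have -> : (x * (m * y) * x^-1 = (x * m * x^-1) * (x * y * x^-1))%g.
    by rewrite !mulgA mulgKV.
  by rewrite mutN ?muxN ?memJV_norm ?T_xyx'.
- by rewrite mulg1 mulgV mut1 mux1 rmorph1 mulr1.
- by rewrite mulf_neq0 ?fmorph_eq0 ?mut_neq0 ?mux_neq0 ?T_xyx'.
exists (L' *m map_mx sigma L); first by rewrite unitmx_mul uL' map_unitmx.
move=> y Ty; rewrite invmxM ?map_unitmx // /Pconj.
have -> : (t * x * y * (t * x)^-1 = t * (x * y * x^-1) * t^-1)%g.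
  by rewrite invMg !mulgA.
have := defPt _ (T_xyx' y Ty); rewrite /Pconj map_mx_id // => ->.
rewrite map_mxZ !map_mxM map_invmx.
have := defPx y Ty; rewrite /Pconj => ->.
by rewrite -scalemxAr -scalemxAl scalerA !mulmxA.
Qed.

End ProjectiveRepresentation.

Lemma inertia_cfAut (gT : finGroupType) (N : {group gT}) (phi : 'CF(N))
    (u : {rmorphism algC -> algC}) :
  'I[cfAut u phi]%g = 'I[phi]%g.
Proof. by apply/setP => y; rewrite !inE -cfAutConjg (inj_eq (cfAut_inj u)). Qed.

Lemma cfConjAut_mul_inertia (gT : finGroupType) (N : {group gT}) (theta : 'CF(N))
    (sigma : {rmorphism algC -> algC}) t x :
  t \in 'I[theta]%g -> x \in 'N(N)%g ->
  cfConjAut theta (t * x)%g sigma = cfConjAut theta x sigma.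
Proof.
move=> It nNx; have nNt := subsetP (norm_inertia theta) t It.
by rewrite /cfConjAut cfConjgMnorm // (inertiaJ It).
Qed.

Lemma conj_Inertia_fixed (gT : finGroupType) (G N : {group gT}) (theta : 'CF(N))
    (sigma : {rmorphism algC -> algC}) x :
  (N <| G)%g -> x \in G -> cfConjAut theta x sigma = theta ->
  ('I_G[theta] :^ x)%g = 'I_G[theta]%g.
Proof.
move=> nsNG Gx fix_x; have nNx := subsetP (normal_norm nsNG) x Gx.
rewrite conjIg conjGid // conjg_inertia //; congr (_ :&: _).
by rewrite -{2}fix_x /cfConjAut inertia_cfAut.
Qed.

Theorem lemma1p7 (p : nat) (gT : finGroupType) (G N : {group gT})
  (theta : 'CF(N)) (n : nat) (P : gT -> 'M[algC]_n) (alpha : gT -> gT -> algC) :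
  prime p ->
  H_triple p G theta ->
  proj_rep_assoc ('I_G[theta])%g theta P alpha ->
  (forall y, y \in ('I_G[theta])%g -> forall i j, Qab (P y i j)) ->
  (* (a) *)
  (forall g, g \in ('I_G[theta])%g ->
    let mu_g := fun y => alpha g g^-1%g / (alpha g (y * g^-1)%g * alpha y g^-1%g) in
    let M := P g in
    [/\ (forall y, y \in ('I_G[theta])%g ->
           Pconj P g id y = mu_g y *: (M *m P y *m invmx M)),
        is_mu N ('I_G[theta])%g P g id mu_g,
        (forall mu, is_mu N ('I_G[theta])%g P g id mu ->
           forall y, y \in ('I_G[theta])%g -> mu y = mu_g y) &
        (forall y, y \in ('I_G[theta])%g -> Qab (mu_g y) /\ mu_g y != 0)])
  /\
  (* (b) *)
  (forall (g : gT) (sigma : {rmorphism algC -> algC}) (t x : gT),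
    g \in G -> in_calH p sigma -> cfConjAut theta g sigma = theta ->
    t \in ('I_G[theta])%g -> x \in G -> g = (t * x)%g ->
    [/\ cfConjAut theta x sigma = theta,
        (('I_G[theta])%g :^ x)%g = ('I_G[theta])%g &
        forall mu_gs mu_t mu_xs,
          is_mu N ('I_G[theta])%g P g sigma mu_gs ->
          is_mu N ('I_G[theta])%g P t id mu_t ->
          is_mu N ('I_G[theta])%g P x sigma mu_xs ->
          forall y, y \in ('I_G[theta])%g ->
            mu_gs y = sigma (mu_t (x * y * x^-1)%g) * mu_xs y]).
Proof.
move=> _ [nsNG [irr_theta _]] projP Qab_P.
have nsNT : (N <| 'I_G[theta])%g by apply/normal_Inertia/normal_sub.
split=> [g Tg|g sigma t x _ _ fix_g Tt Gx def_g].
  rewrite -/(factor_set_mu alpha g) /=.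
  have is_mu_g := is_mu_factor_set nsNT irr_theta projP Tg.
  split=> // [y Ty | mu is_mu_mu y Ty | y Ty].
  - by have := Pconj_proj_repr projP Tg Ty.
  - exact: (is_mu_uniq nsNT irr_theta projP is_mu_mu is_mu_g).
  - split; first exact: (Qab_factor_set_mu irr_theta projP Qab_P Tg Ty).
    exact: (factor_set_mu_neq0 projP Tg Ty).
have nNx := subsetP (normal_norm nsNG) x Gx.
have fix_x : cfConjAut theta x sigma = theta.
  have It : t \in 'I[theta]%g by case/setIP: Tt.
  by rewrite -[RHS]fix_g def_g cfConjAut_mul_inertia.
have IJx := conj_Inertia_fixed nsNG Gx fix_x.
split=> // mu_gs mu_t mu_x is_mu_gs is_mu_t is_mu_x.
have nTx : x \in 'N('I_G[theta])%g by apply/normP.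
rewrite def_g in is_mu_gs.
have is_mu_prod := is_mu_mul nNx nTx is_mu_t is_mu_x.
exact: (is_mu_uniq nsNT irr_theta projP is_mu_gs is_mu_prod).
Qed.
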